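(* Let $\mathcal{A}$ be a complex unital $*$-algebra with a fixed generating set $\{a_i : i\in I\}$ closed under the involution, and let $\delta(\mathcal{A})$ be as defined in the context. Let $\mathcal{B}\subseteq\mathcal{C}$ be $*$-invariant linear subspaces of $\mathcal{A}$, both connected to $1$, and let $m\ge 1$ be an integer with $\mathcal{B}^{[m]}\subseteq\mathcal{C}$ and $2m\ge\delta(\mathcal{A})$. Let $L$ be a hermitian linear functional on $\mathcal{C}^2$ which is a flat extension with respect to $\mathcal{B}$, i.e. $\mathcal{C}=\mathcal{B}+K_L(\mathcal{C})$. Then: (1) There exists a unique hermitian linear functional $\mathcal{L}$ on $\mathcal{A}$ extending $L$ such that $\mathcal{A}=\mathcal{C}+K_{\mathcal{L}}(\mathcal{A})$ (equivalently, such that $\mathcal{A}=\mathcal{B}+K_{\mathcal{L}}(\mathcal{A})$). (2) Let $\mathcal{B}'\subseteq\mathcal{B}$ be any linear subspace with $1\in\mathcal{B}'$ and $\mathcal{C}=\mathcal{B}'\oplus K_L(\mathcal{C})$ (direct sum of vector spaces); such a choice is possible unless $L\equiv 0$. Then $\mathcal{A}=\mathcal{B}'\oplus K_{\mathcal{L}}(\mathcal{A})$, the form $\langle\cdot,\cdot\rangle_{\mathcal{L}}$ is non-degenerate on $\mathcal{B}'$, and the projection of $\mathcal{C}$ onto $\mathcal{B}'$ along $K_L(\mathcal{C})$ extends to the projection $\pi_{\mathcal{L}}:\mathcal{A}\to\mathcal{B}'$ along $K_{\mathcal{L}}(\mathcal{A})$. The formula $\rho_{\mathcal{L}}(a)b=\pi_{\mathcal{L}}(ab)$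 ($a\in\mathcal{A}$, $b\in\mathcal{B}'$) defines a $*$-representation $\rho_{\mathcal{L}}$ of $\mathcal{A}$ on $(\mathcal{B}',\langle\cdot,\cdot\rangle_{\mathcal{L}})$ with $\mathcal{L}(a)=\langle\rho_{\mathcal{L}}(a)1,1\rangle_{\mathcal{L}}$ for all $a\in\mathcal{A}$. (3) If moreover $L$ is positive on $\mathcal{C}^2$, then $\mathcal{L}$ is a positive linear functional on $\mathcal{A}$ and $\langle\cdot,\cdot\rangle_{\mathcal{L}}$ is a scalar product (positive definite) on $\mathcal{B}'$.
   Context: $\mathcal{A}$ is a complex unital $*$-algebra with unit $1$. For a $*$-invariant linear subspace $\mathcal{C}\ni 1$ of $\mathcal{A}$, $\mathcal{C}^2:=\mathrm{Lin}\{ab: a,b\in\mathcal{C}\}$. A linear functional $L$ on a $*$-invariant subspace is hermitian if $L(b^* )=\overline{L(b)}$. For hermitian $L$ on $\mathcal{C}^2$, put $\langle a,b\rangle_L:=L(b^*a)$ for $a,b\in\mathcal{C}$ and $K_L(\mathcal{C}):=\{a\in\mathcal{C}:\langle a,b\rangle_L=0\ \forall b\in\mathcal{C}\}$. $L$ is positive if $L(a^*a)\ge 0$ for all $a\in\mathcal{C}$. For $\mathcal{B}\subseteq\mathcal{C}$ both $*$-invariant with $1\in\mathcal{B}$, a hermitian $L$ on $\mathcal{C}^2$ is a flat extension with respect to $\mathcal{B}$ if $\mathcal{C}=\mathcal{B}+K_L(\mathcal{C})$. A $*$-representation of $\mathcal{A}$ on a vector space $V$ with hermitian sesquilinear form $\langle\cdot,\cdot\rangle$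 is an algebra homomorphism $\rho$ from $\mathcal{A}$ into linear operators on $V$ with $\rho(1)=I$ and $\langle\rho(a)v,w\rangle=\langle v,\rho(a^* )w\rangle$. Fix generators $\{a_i:i\in I\}$ of $\mathcal{A}$ such that for each $i$ there is $j$ with $a_i^*=a_j$. For a subspace $V\subseteq\mathcal{A}$, its prolongation is $V^+:=V+\mathrm{Lin}\{a_iv: i\in I, v\in V\}$; $V^{[0]}=V$, $V^{[l+1]}=(V^{[l]})^+$. $V$ is connected to $1$ if $1\in V$ and there are subspaces $\mathbb{C}\cdot 1=V_0\subseteq V_1\subseteq\cdots\subseteq V$ with $\bigcup_l V_l=V$ and $V_{l+1}\subseteq V_l^+$. Let $\mathcal{F}=\mathbb{C}\langle x_i:i\in I\rangle$ be the free unital $*$-algebra with $x_i^*=x_j$ whenever $a_i^*=a_j$, and $\sigma:\mathcal{F}\to\mathcal{A}$ the $*$-homomorphism with $\sigma(x_i)=a_i$; $\mathcal{I}=\ker\sigma$. The index of $p\in\mathcal{F}$ is the smallest $l$ such that $p$ is a linear combination of words of length $\le l$ in the $x_i$. For a set $S$ generating $\mathcal{I}$ as a two-sided ideal, $\delta(S)\in\mathbb{N}\cup\{\infty\}$ is the maximal index of elements of $S$, and $\delta(\mathcal{A})$ is the minimum of $\delta(S)$ over all such $S$. *)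

From HB Require Import structures.
From mathcomp Require Import all_boot all_order all_algebra.
From Stdlib Require List.
Set Implicit Arguments. Unset Strict Implicit. Unset Printing Implicit Defensive.
Import Order.TTheory GRing.Theory Num.Theory.
Local Open Scope ring_scope.

Definition is_involution (C : numClosedFieldType) (A : algType C)
  (star : A -> A) : Prop :=
  [/\ forall x y, star (x + y) = star x + star y,
      forall (c : C) x, star (c *: x) = c^* *: star x,
      forall x y, star (x * y) = star y * star x
    & forall x, star (star x) = x].

Definition subspace (C : numClosedFieldType) (A : lmodType C) (V : A -> Prop) : Prop :=
  [/\ V 0, forall x y, V x -> V y -> V (x + y)
    & forall (c : C) x, V x -> V (c *: x)].

Definition star_invariant (A : Type) (star : A -> A) (V : A -> Prop) : Prop :=
  forall x, V x -> V (star x).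

Inductive inspan (C : numClosedFieldType) (A : lmodType C) (P : A -> Prop) : A -> Prop :=
| inspan_gen x : P x -> inspan P x
| inspan0 : inspan P 0
| inspanD x y : inspan P x -> inspan P y -> inspan P (x + y)
| inspanZ (c : C) x : inspan P x -> inspan P (c *: x).

Definition sq (C : numClosedFieldType) (A : algType C) (V : A -> Prop) : A -> Prop :=
  inspan (fun x => exists a b, [/\ V a, V b & x = a * b]).

Definition prol (C : numClosedFieldType) (A : algType C) (I : Type) (gen : I -> A)
  (V : A -> Prop) : A -> Prop :=
  inspan (fun x => V x \/ exists i v, V v /\ x = gen i * v).

Fixpoint prol_iter (C : numClosedFieldType) (A : algType C) (I : Type) (gen : I -> A)
  (l : nat) (V : A -> Prop) : A -> Prop :=
  match l with
  | 0%N => V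
  | l'.+1 => prol gen (prol_iter gen l' V)
  end.

Definition connected_to_1 (C : numClosedFieldType) (A : algType C) (I : Type)
  (gen : I -> A) (V : A -> Prop) : Prop :=
  V 1 /\
  exists Vs : nat -> A -> Prop,
    (forall l, subspace (Vs l)) /\
    (forall x, Vs 0%N x <-> exists c : C, x = c *: 1) /\
    (forall l x, Vs l x -> Vs l.+1 x) /\
    (forall l x, Vs l x -> V x) /\
    (forall x, V x -> exists l, Vs l x) /\
    (forall l x, Vs l.+1 x -> prol gen (Vs l) x).

Definition linear_on (C : numClosedFieldType) (A : lmodType C) (W : A -> Prop)
  (L : A -> C) : Prop :=
  (forall x y, W x -> W y -> L (x + y) = L x + L y) /\
  (forall (c : C) x, W x -> L (c *: x) = c * L x).

Definition hermitian_on (C : numClosedFieldType) (A : Type) (star : A -> A)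
  (W : A -> Prop) (L : A -> C) : Prop :=
  forall b, W b -> L (star b) = (L b)^*.

Definition sform (C : numClosedFieldType) (A : algType C) (star : A -> A)
  (L : A -> C) (a b : A) : C := L (star b * a).

Definition kerL (C : numClosedFieldType) (A : algType C) (star : A -> A)
  (L : A -> C) (V : A -> Prop) : A -> Prop :=
  fun a => V a /\ forall b, V b -> sform star L a b = 0.

Definition positive_on (C : numClosedFieldType) (A : algType C) (star : A -> A)
  (V : A -> Prop) (L : A -> C) : Prop :=
  forall a, V a -> 0 <= L (star a * a).

Definition is_sum (A : zmodType) (V P Q : A -> Prop) : Prop :=
  forall x, V x <-> exists p q, [/\ P p, Q q & x = p + q].

Definition is_direct_sum (A : zmodType) (V P Q : A -> Prop) : Prop :=
  is_sum V P Q /\ forall x, P x -> Q x -> x = 0.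

Definition star_rep (C : numClosedFieldType) (A : algType C) (star : A -> A)
  (V : A -> Prop) (f : A -> A -> C) (rho : A -> A -> A) : Prop :=
  (forall a v, V v -> V (rho a v)) /\
  (forall a v w, V v -> V w -> rho a (v + w) = rho a v + rho a w) /\
  (forall a (c : C) v, V v -> rho a (c *: v) = c *: rho a v) /\
  (forall a b v, V v -> rho (a + b) v = rho a v + rho b v) /\
  (forall (c : C) a v, V v -> rho (c *: a) v = c *: rho a v) /\
  (forall a b v, V v -> rho (a * b) v = rho a (rho b v)) /\
  (forall v, V v -> rho 1 v = v) /\
  (forall a v w, V v -> V w -> f (rho a v) w = f v (rho (star a) w)).

(* elements of F: coefficient functions on words; those of finite support
   are the noncommutative polynomials *)
Definition fpoly (C : numClosedFieldType) (I : Type) := seq I -> C.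

Definition fin_supp (C : numClosedFieldType) (I : Type) (p : fpoly C I) : Prop :=
  exists s : seq (seq I), forall w, p w <> 0 -> List.In w s.

Definition fadd (C : numClosedFieldType) (I : Type) (p q : fpoly C I) : fpoly C I :=
  fun w => p w + q w.

Definition fmul (C : numClosedFieldType) (I : Type) (p q : fpoly C I) : fpoly C I :=
  fun w => \sum_(k < (size w).+1) p (take k w) * q (drop k w).

Inductive ideal_gen (C : numClosedFieldType) (I : Type) (S : fpoly C I -> Prop)
  : fpoly C I -> Prop :=
| ig_gen p : S p -> ideal_gen S p
| ig_zero : ideal_gen S (fun _ => 0)
| ig_add p q : ideal_gen S p -> ideal_gen S q -> ideal_gen S (fadd p q)
| ig_lmul u p : fin_supp u -> ideal_gen S p -> ideal_gen S (fmul u p)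
| ig_rmul p u : fin_supp u -> ideal_gen S p -> ideal_gen S (fmul p u)
| ig_ext p q : (forall w, p w = q w) -> ideal_gen S p -> ideal_gen S q.

Definition word (C : numClosedFieldType) (A : algType C) (I : Type) (gen : I -> A)
  (w : seq I) : A := \prod_(i <- w) gen i.

Definition sigma_rel (C : numClosedFieldType) (A : algType C) (I : Type)
  (gen : I -> A) (p : fpoly C I) (x : A) : Prop :=
  exists s : seq (seq I),
    [/\ List.NoDup s, forall w, p w <> 0 -> List.In w s
      & x = \sum_(w <- s) p w *: word gen w].

Definition ker_sigma (C : numClosedFieldType) (A : algType C) (I : Type)
  (gen : I -> A) (p : fpoly C I) : Prop := sigma_rel gen p 0.

Definition generates (C : numClosedFieldType) (A : algType C) (I : Type)
  (gen : I -> A) : Prop := forall x : A, exists p, sigma_rel gen p x.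

Definition index_le (C : numClosedFieldType) (I : Type) (p : fpoly C I) (n : nat) : Prop :=
  forall w, p w <> 0 -> (size w <= n)%N.

(* delta(A) <= n : some generating set S of the ideal ker sigma has delta(S) <= n
   (delta(A) is a minimum over a subset of N u {oo}, so this is exactly
   "delta(A) <= n"). *)
Definition delta_le (C : numClosedFieldType) (A : algType C) (I : Type)
  (gen : I -> A) (n : nat) : Prop :=
  exists S : fpoly C I -> Prop,
    (forall p, ker_sigma gen p <-> ideal_gen S p) /\
    (forall p, S p -> index_le p n).

From HB Require Import structures.
From mathcomp Require Import all_boot all_order all_algebra.
From mathcomp Require Import boolp classical_sets.
From mathcomp Require Import zify ring.
Import Order.TTheory GRing.Theory Num.Theory.
Local Open Scope ring_scope.

(* Fix a complement B' of K_L(C) in C containing 1, and let pi be the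
   projection of C onto B' along K_L(C).  A generator a_i acts on B' by
   v |-> pi (a_i v), and a word w by the composite R_w of these maps.
   Flatness (an element of the prolongation of K_L(C) lying in C lies in
   K_L(C)) gives w v - R_w v \in K_L(C) for |w| <= m, hence, splitting a word
   in two halves, <R_w v, c>_L = L (c^* w v) for |w| <= 2m.  As ker sigma is
   generated by relations of index <= 2m and <.,.>_L is non-degenerate on B',
   every relation acts as zero, so the action descends to a *-representation
   rho of A on B', and the extension is a |-> L (rho(a) 1).  Such a B' exists
   by Zorn's lemma unless 1 \in K_L(C); then B \subseteq K_L(C), L vanishes
   on C^2, and the extension is 0. *)

Lemma In_mem (T : eqType) (x : T) (s : seq T) : List.In x s <-> x \in s.
Proof.
elim: s => [|y s IH] //=; rewrite in_cons; split.
- by case=> [->|/IH ->]; rewrite ?eqxx ?orbT.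
- by case/orP=> [/eqP ->|/IH]; [left|right].
Qed.

Lemma NoDup_uniq (T : eqType) (s : seq T) : List.NoDup s <-> uniq s.
Proof.
elim: s => [|y s IH] /=; first by split=> // _; constructor.
split.
- move=> H; inversion H; subst; apply/andP; split; last by apply/IH.
  by apply/negP => /In_mem.
- case/andP=> Hy Hu; constructor; last by apply/IH.
  by move/In_mem; apply/negP.
Qed.

Lemma eq_big_supp (T : eqType) (V : zmodType) (F : T -> V) (s1 s2 : seq T) :
  uniq s1 -> uniq s2 -> (forall x, F x != 0 -> x \in s1) ->
  (forall x, F x != 0 -> x \in s2) ->
  \sum_(x <- s1) F x = \sum_(x <- s2) F x.
Proof.
move=> u1 u2 h1 h2.
have E s : \sum_(x <- s) F x = \sum_(x <- [seq x <- s | F x != 0]) F x.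
  by rewrite big_filter [RHS]big_mkcond; apply: eq_bigr => x _; case: eqP.
rewrite (E s1) (E s2); apply: perm_big; apply: uniq_perm; rewrite ?filter_uniq //.
move=> x; rewrite !mem_filter; case: (F x != 0) /idP => //= Fx.
by rewrite (h1 _ Fx) (h2 _ Fx).
Qed.

Section Subspace.
Context {C : numClosedFieldType} {V : lmodType C} {S : V -> Prop}.
Hypothesis HS : subspace S.

Lemma subspace0 : S 0. Proof. by case: HS. Qed.
Lemma subspaceD {x y} : S x -> S y -> S (x + y). Proof. by case: HS => _ h _; apply: h. Qed.
Lemma subspaceZ (c : C) {x} : S x -> S (c *: x). Proof. by case: HS => _ _ h; apply: h. Qed.
Lemma subspaceN {x} : S x -> S (- x). Proof. by rewrite -scaleN1r; apply: subspaceZ. Qed.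
Lemma subspaceB {x y} : S x -> S y -> S (x - y).
Proof. by move=> hx hy; apply: (subspaceD hx (subspaceN hy)). Qed.

Lemma subspace_sum (T : Type) (s : seq T) (F : T -> V) :
  (forall x, S (F x)) -> S (\sum_(x <- s) F x).
Proof.
move=> hF; elim: s => [|x s IH]; first by rewrite big_nil; apply: subspace0.
by rewrite big_cons; apply: subspaceD.
Qed.

End Subspace.

Lemma inspan_subspace (C : numClosedFieldType) (V : lmodType C) (P : V -> Prop) :
  subspace (inspan P).
Proof. by split; [exact: inspan0 | exact: inspanD | exact: inspanZ]. Qed.

Lemma prol_subset {C : numClosedFieldType} {A : algType C} {I : Type} {gen : I -> A}
  {V W : A -> Prop} : (forall x, V x -> W x) -> forall x, prol gen V x -> prol gen W x.
Proof.
move=> VW x; elim=> {x} [x [/VW hx|[i [v [/VW hv ->]]]]| |x y _ hx _ hy|c x _ hx].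
- by apply: inspan_gen; left.
- by apply: inspan_gen; right; exists i, v.
- exact: inspan0.
- exact: inspanD hx hy.
- exact: inspanZ hx.
Qed.

Lemma conj_affine_ge0_eq0 (C : numClosedFieldType) (a z : C) :
  (forall t : C, 0 <= a + t^* * z + t * z^*) -> z = 0.
Proof.
move=> hq; apply/eqP/negPn/negP => z0.
have a0 : 0 <= a by have := hq 0; rewrite rmorph0 !mul0r !addr0.
have n0 : z * z^* != 0 by rewrite mul_conjC_eq0.
pose s := (a + 1) / (z * z^*).
have s0 : 0 <= s by apply: divr_ge0; [exact: addr_ge0 a0 ler01 | exact: mul_conjC_ge0].
have sc : s^* = s := geC0_conj s0.
have := hq (- (s * z)); rewrite rmorphN rmorphM /= sc.
have -> : a + - (s * z^*) * z + - (s * z) * z^* = - (a + 2).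
  by rewrite /s; field; rewrite ?conjC_eq0 ?z0 ?n0.
rewrite oppr_ge0 => h.
have : 0 < a + 2 by rewrite ltr_wpDl // ltr0n.
by move/lt_geF; rewrite h.
Qed.

(** * Supports of noncommutative polynomials *)

Definition supp_enum {T : eqType} {R : zmodType} (p : T -> R) (s : seq T) :=
  uniq s /\ forall w, p w != 0 -> w \in s.

Section SupportEnumeration.
Context {T : eqType} {R : zmodType}.
Implicit Types (p q : T -> R) (s t : seq T).

Lemma supp_enum_catl {p s t} : supp_enum p s -> supp_enum p (undup (s ++ t)).
Proof.
by case=> _ h; split; [exact: undup_uniq | move=> w /h hw; rewrite mem_undup mem_cat hw].
Qed.

Lemma supp_enum_catr {p s t} : supp_enum p t -> supp_enum p (undup (s ++ t)).
Proof.
by case=> _ h; split; [exact: undup_uniq | move=> w /h hw; rewrite mem_undup mem_cat hw orbT].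
Qed.

End SupportEnumeration.

Lemma eq_big_supp_enum {T : eqType} {R : pzRingType} {V : lmodType R} {p : T -> R}
  {s1 s2 : seq T} (G : T -> V) : supp_enum p s1 -> supp_enum p s2 ->
  \sum_(w <- s1) p w *: G w = \sum_(w <- s2) p w *: G w.
Proof.
move=> [u1 h1] [u2 h2]; apply: eq_big_supp => // w hw.
  by apply: h1; apply: contraNneq hw => ->; rewrite scale0r.
by apply: h2; apply: contraNneq hw => ->; rewrite scale0r.
Qed.

Lemma take_drop_inj {T : Type} {w1 w2 : seq T} {k1 k2 : nat} :
  (take k1 w1, drop k1 w1) = (take k2 w2, drop k2 w2) ->
  (k1 <= size w1)%N -> (k2 <= size w2)%N -> (w1, k1) = (w2, k2).
Proof.
move=> [e1 e2] hk1 hk2.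
have ew : w1 = w2 by rewrite -(cat_take_drop k1 w1) -(cat_take_drop k2 w2) e1 e2.
subst w2; have : size (take k1 w1) = size (take k2 w1) by rewrite e1.
by rewrite !size_take_min => e; congr (_, _); lia.
Qed.

Section FreeAlgebra.
Context {C : numClosedFieldType} {I : eqType}.
Implicit Types (p q u : fpoly C I) (s t : seq (seq I)).

Lemma fin_supp_enum {p} : fin_supp p -> exists s, supp_enum p s.
Proof.
case=> s0 h; exists (undup s0); split; first exact: undup_uniq.
by move=> w /eqP hw; rewrite mem_undup; apply/In_mem; apply: h.
Qed.

Lemma supp_enum_fin {p s} : supp_enum p s -> fin_supp p.
Proof. by case=> _ h; exists s => w /eqP hw; apply/In_mem; apply: h. Qed.

Lemma supp_enum_fadd {p q s t} : supp_enum p s -> supp_enum q t ->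
  supp_enum (fadd p q) (undup (s ++ t)).
Proof.
move=> [_ hp] [_ hq]; split=> [|w]; first exact: undup_uniq.
rewrite mem_undup mem_cat /fadd; have [e|/hp -> //] := eqVneq (p w) 0.
by rewrite e add0r => /hq ->; rewrite orbT.
Qed.

Lemma supp_enum_fmul {u p} {su sp : seq (seq I)} : supp_enum u su -> supp_enum p sp ->
  supp_enum (fmul u p) (undup [seq w1 ++ w2 | w1 <- su, w2 <- sp]).
Proof.
move=> [_ hu] [_ hp]; split=> [|w]; first exact: undup_uniq.
apply: contraR => hw; apply/eqP; rewrite /fmul big1 // => k _.
apply/eqP; rewrite mulf_eq0; apply/negPn/negP => /norP [h1 h2].
apply: (negP hw); rewrite mem_undup -(cat_take_drop k w).
by apply: allpairs_f; [apply: hu | apply: hp].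
Qed.

(* The Cauchy product, summed over its support, is a double sum over pairs of
   words: each word of the support splits at one position [k] into a pair. *)
Lemma big_fmul {V : lmodType C} {u p} {su sp : seq (seq I)} (G : seq I -> V) :
  supp_enum u su -> supp_enum p sp ->
  \sum_(w <- undup [seq w1 ++ w2 | w1 <- su, w2 <- sp]) fmul u p w *: G w =
  \sum_(w1 <- su) \sum_(w2 <- sp) (u w1 * p w2) *: G (w1 ++ w2).
Proof.
move=> [usu hu] [usp hp].
set s := undup _.
pose H (x : seq I * seq I) := (u x.1 * p x.2) *: G (x.1 ++ x.2).
pose Pwk := [seq (w, k) | w <- s, k <- iota 0 (size w).+1].
pose Q := [seq (take x.2 x.1, drop x.2 x.1) | x <- Pwk].
have -> : \sum_(w <- s) fmul u p w *: G w = \sum_(x <- Q) H x.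
  rewrite big_map /Pwk big_allpairs_dep; apply: eq_bigr => w _.
  rewrite /fmul scaler_suml.
  rewrite -(big_mkord xpredT (fun k => (u (take k w) * p (drop k w)) *: G w)) /index_iota subn0.
  by apply: eq_bigr => k _; rewrite /H /= cat_take_drop.
have -> : \sum_(w1 <- su) \sum_(w2 <- sp) (u w1 * p w2) *: G (w1 ++ w2) =
    \sum_(x <- [seq (w1, w2) | w1 <- su, w2 <- sp]) H x by rewrite big_allpairs.
apply: eq_big_supp.
- rewrite map_inj_in_uniq.
    apply: allpairs_uniq_dep; first exact: undup_uniq.
      by move=> w _; apply: iota_uniq.
    by move=> [a x] [b y] _ _ /= [-> ->].
  move=> [w1 k1] [w2 k2] h1 h2 /= e; apply: (take_drop_inj e).
    by move/allpairsPdep: h1 => [a [b [_ hb [-> ->]]]]; rewrite mem_iota in hb; lia.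
  by move/allpairsPdep: h2 => [a [b [_ hb [-> ->]]]]; rewrite mem_iota in hb; lia.
- by apply: allpairs_uniq => // [[a b]] [a' b'] _ _ /= [-> ->].
- move=> [a b]; rewrite /H /= scaler_eq0 negb_or mulf_eq0 negb_or.
  case/andP=> /andP [/hu ha /hp hb] _.
  apply/mapP; exists (a ++ b, size a); last by rewrite take_size_cat // drop_size_cat.
  apply/allpairsPdep; exists (a ++ b), (size a); split => //.
    by rewrite mem_undup; apply: allpairs_f.
  by rewrite mem_iota size_cat /=; lia.
- move=> [a b]; rewrite /H /= scaler_eq0 negb_or mulf_eq0 negb_or.
  by case/andP=> /andP [/hu ha /hp hb] _; apply: allpairs_f.
Qed.

End FreeAlgebra.

(** * The flat extension *)

Section FlatExtension.
Context {C : numClosedFieldType} {A : algType C} {star : A -> A}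
  {I : eqType} {gen : I -> A} {Bsp Csp : A -> Prop} {m : nat} {L : A -> C}.
Hypotheses (Hinv : is_involution star) (Hgen : generates gen)
  (Hgs : forall i, exists j, star (gen i) = gen j)
  (HC : subspace Csp) (HCs : star_invariant star Csp)
  (HBC : forall x, Bsp x -> Csp x) (HconC : connected_to_1 gen Csp)
  (Hm : (1 <= m)%N) (Hpro : forall x, prol_iter gen m Bsp x -> Csp x)
  (Hdelta : delta_le gen (2 * m))
  (HLlin : linear_on (sq Csp) L) (HLh : hermitian_on star (sq Csp) L)
  (Hflat : is_sum Csp Bsp (kerL star L Csp)).

Lemma starD x y : star (x + y) = star x + star y. Proof. by case: Hinv. Qed.
Lemma starZ (c : C) x : star (c *: x) = c^* *: star x. Proof. by case: Hinv. Qed.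
Lemma starM x y : star (x * y) = star y * star x. Proof. by case: Hinv. Qed.
Lemma starK x : star (star x) = x. Proof. by case: Hinv. Qed.
Lemma star0 : star 0 = 0. Proof. by have := starZ 0 0; rewrite rmorph0 !scale0r. Qed.

Lemma star1 : star 1 = 1.
Proof. by have := starM (star 1) 1; rewrite mulr1 starK mulr1. Qed.

Lemma star_sum (T : Type) (s : seq T) (F : T -> A) :
  star (\sum_(x <- s) F x) = \sum_(x <- s) star (F x).
Proof.
elim: s => [|x s IH]; first by rewrite !big_nil star0.
by rewrite !big_cons starD IH.
Qed.

Definition star_idx i := proj1_sig (cid (Hgs i)).
Lemma star_gen i : star (gen i) = gen (star_idx i).
Proof. exact: proj2_sig (cid (Hgs i)). Qed.
Lemma star_gen_idx i : star (gen (star_idx i)) = gen i.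
Proof. by rewrite -star_gen starK. Qed.

Lemma word_nil : word gen [::] = 1. Proof. by rewrite /word big_nil. Qed.
Lemma word_cons i w : word gen (i :: w) = gen i * word gen w.
Proof. by rewrite /word big_cons. Qed.
Lemma word_cat w1 w2 : word gen (w1 ++ w2) = word gen w1 * word gen w2.
Proof. by rewrite /word big_cat. Qed.

Definition wstar (w : seq I) := rev (map star_idx w).
Lemma size_wstar w : size (wstar w) = size w.
Proof. by rewrite /wstar size_rev size_map. Qed.
Lemma wstar_cons i w : wstar (i :: w) = wstar w ++ [:: star_idx i].
Proof. by rewrite /wstar /= rev_cons cats1. Qed.

Lemma star_word w : star (word gen w) = word gen (wstar w).
Proof.
elim: w => [|i w IH]; first by rewrite /wstar /= word_nil star1.
by rewrite word_cons starM IH star_gen wstar_cons word_cat word_cons word_nil mulr1.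
Qed.

Lemma star_word_wstar w : star (word gen (wstar w)) = word gen w.
Proof. by rewrite -star_word starK. Qed.

Lemma sigma_relP p x : sigma_rel gen p x <->
  exists s, supp_enum p s /\ x = \sum_(w <- s) p w *: word gen w.
Proof.
split=> [[s [nd cov ->]]|[s [[u hs] ->]]]; exists s; split=> //.
- split; first exact/NoDup_uniq.
  by move=> w /eqP hw; apply/In_mem; apply: cov.
- exact/NoDup_uniq.
- by move=> w hw; apply/In_mem; apply: hs; apply/eqP.
Qed.

Definition represents (p : seq I -> C) s (a : A) :=
  supp_enum p s /\ a = \sum_(w <- s) p w *: word gen w.

Lemma represents_add {p s a q t b} : represents p s a -> represents q t b ->
  represents (fadd p q) (undup (s ++ t)) (a + b).
Proof.
move=> [vp ->] [vq ->]; split; first exact: supp_enum_fadd.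
symmetry; rewrite /fadd; under eq_bigr do rewrite scalerDl.
rewrite big_split /= (eq_big_supp_enum (word gen) (supp_enum_catl vp) vp).
by rewrite (eq_big_supp_enum (word gen) (supp_enum_catr vq) vq).
Qed.

Lemma represents_scale (c : C) {p s a} : represents p s a ->
  represents (fun w => c * p w) s (c *: a).
Proof.
move=> [[u h] ->]; split; last by rewrite scaler_sumr; apply: eq_bigr => w _; rewrite scalerA.
by split=> // w hw; apply: h; apply: contraNneq hw => ->; rewrite mulr0.
Qed.

Lemma represents0 : represents (fun _ => 0) [::] 0.
Proof. by split; [split=> // w; rewrite eqxx | rewrite big_nil]. Qed.

Lemma represents_word w : represents (fun w' => (w' == w)%:R) [:: w] (word gen w).
Proof.
split; last by rewrite big_cons big_nil eqxx scale1r addr0.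
split=> // w' hw'; rewrite inE; apply/negPn/negP => hn.
by move: hw'; rewrite (negbTE hn) mulr0n eqxx.
Qed.

Lemma rep_exists a : exists ps : (seq I -> C) * seq (seq I), represents ps.1 ps.2 a.
Proof. by have [p /sigma_relP [s hs]] := Hgen a; exists (p, s). Qed.

Definition rep a := proj1_sig (cid (rep_exists a)).
Lemma rep_spec a : represents (rep a).1 (rep a).2 a.
Proof. exact: proj2_sig (cid (rep_exists a)). Qed.

Lemma Csp1 : Csp 1. Proof. by case: HconC. Qed.
Lemma sq_subspace : subspace (sq Csp). Proof. exact: inspan_subspace. Qed.
Lemma sqM {a b} : Csp a -> Csp b -> sq Csp (a * b).
Proof. by move=> ha hb; apply: inspan_gen; exists a, b. Qed.
Lemma sq_Csp {c} : Csp c -> sq Csp c.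
Proof. by move=> h; rewrite -[c]mulr1; apply: sqM => //; apply: Csp1. Qed.
Lemma sq_star {a b} : Csp a -> Csp b -> sq Csp (star a * b).
Proof. by move=> ha hb; apply: sqM => //; apply: HCs. Qed.

Lemma LD x y : sq Csp x -> sq Csp y -> L (x + y) = L x + L y.
Proof. by case: HLlin => h _; apply: h. Qed.
Lemma LZ (c : C) x : sq Csp x -> L (c *: x) = c * L x.
Proof. by case: HLlin => _ h; apply: h. Qed.
Lemma L0 : L 0 = 0.
Proof. by have := LZ 0 _ (subspace0 sq_subspace); rewrite scale0r mul0r. Qed.

Lemma L_sum (T : Type) (s : seq T) (F : T -> A) :
  (forall x, sq Csp (F x)) -> L (\sum_(x <- s) F x) = \sum_(x <- s) L (F x).
Proof.
move=> hF; elim: s => [|x s IH]; first by rewrite !big_nil L0.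
have hs : sq Csp (\sum_(y <- s) F y) := subspace_sum sq_subspace _ _ _ hF.
have hx := hF x.
by rewrite !big_cons LD // IH.
Qed.

Local Notation sf := (sform star L).
Local Notation K := (kerL star L Csp).

Lemma sfE x y : sf x y = L (star y * x). Proof. by []. Qed.

Lemma sfDl x1 x2 y : Csp x1 -> Csp x2 -> Csp y -> sf (x1 + x2) y = sf x1 y + sf x2 y.
Proof. by move=> *; rewrite !sfE mulrDr LD //; apply: sq_star. Qed.
Lemma sfZl (c : C) x y : Csp x -> Csp y -> sf (c *: x) y = c * sf x y.
Proof. by move=> *; rewrite !sfE -scalerAr LZ //; apply: sq_star. Qed.
Lemma sfDr x y1 y2 : Csp x -> Csp y1 -> Csp y2 -> sf x (y1 + y2) = sf x y1 + sf x y2.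
Proof. by move=> *; rewrite !sfE starD mulrDl LD //; apply: sq_star. Qed.
Lemma sfZr (c : C) x y : Csp x -> Csp y -> sf x (c *: y) = c^* * sf x y.
Proof. by move=> *; rewrite !sfE starZ -scalerAl LZ //; apply: sq_star. Qed.
Lemma sf0l y : sf 0 y = 0. Proof. by rewrite sfE mulr0 L0. Qed.
Lemma sf0r x : sf x 0 = 0. Proof. by rewrite sfE star0 mul0r L0. Qed.
Lemma sf1r x : sf x 1 = L x. Proof. by rewrite sfE star1 mul1r. Qed.

Lemma sf_conj {x y} : Csp x -> Csp y -> sf x y = (sf y x)^*.
Proof.
move=> hx hy; rewrite !sfE -HLh; last exact: sq_star.
by rewrite starM starK.
Qed.

Lemma sf_suml (T : Type) (s : seq T) (c : T -> C) (F : T -> A) y :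
  (forall x, Csp (F x)) -> Csp y ->
  sf (\sum_(x <- s) c x *: F x) y = \sum_(x <- s) c x * sf (F x) y.
Proof.
move=> hF hy; elim: s => [|x s IH]; first by rewrite !big_nil sf0l.
have hs : Csp (\sum_(z <- s) c z *: F z).
  by apply: (subspace_sum HC) => z; exact: (subspaceZ HC (c z) (hF z)).
have hx := hF x; have hcx := subspaceZ HC (c x) hx.
by rewrite !big_cons sfDl // sfZl // IH.
Qed.

Lemma sf_sumr (T : Type) (s : seq T) (c : T -> C) (F : T -> A) x :
  (forall y, Csp (F y)) -> Csp x ->
  sf x (\sum_(y <- s) c y *: F y) = \sum_(y <- s) (c y)^* * sf x (F y).
Proof.
move=> hF hx; elim: s => [|y s IH]; first by rewrite !big_nil sf0r.
have hs : Csp (\sum_(z <- s) c z *: F z).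
  by apply: (subspace_sum HC) => z; exact: (subspaceZ HC (c z) (hF z)).
have hy := hF y; have hcy := subspaceZ HC (c y) hy.
by rewrite !big_cons sfDr // sfZr // IH.
Qed.

Lemma K_Csp {k} : K k -> Csp k. Proof. by case. Qed.
Lemma K_sfl {k y} : K k -> Csp y -> sf k y = 0. Proof. by case=> _ h; apply: h. Qed.
Lemma K_sfr {k y} : K k -> Csp y -> sf y k = 0.
Proof. by move=> hk hy; rewrite (sf_conj hy (K_Csp hk)) (K_sfl hk hy) rmorph0. Qed.

Lemma K_subspace : subspace K.
Proof.
split.
- by split; [apply: (subspace0 HC) | move=> b _; apply: sf0l].
- move=> x y [hx Hx] [hy Hy]; split; first exact: (subspaceD HC hx hy).
  by move=> b hb; rewrite sfDl // Hx // Hy // addr0.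
- move=> c x [hx Hx]; split; first exact: (subspaceZ HC c hx).
  by move=> b hb; rewrite sfZl // Hx // mulr0.
Qed.

Lemma sf_modKl {x x' y} : Csp x' -> Csp y -> K (x - x') -> sf x y = sf x' y.
Proof.
move=> hx' hy kx; have hd := K_Csp kx.
by rewrite -[x](subrK x') sfDl // (K_sfl kx hy) add0r.
Qed.

Lemma sf_modKr {x y y'} : Csp x -> Csp y' -> K (y - y') -> sf x y = sf x y'.
Proof.
move=> hx hy' ky; have hd := K_Csp ky.
by rewrite -[y](subrK y') sfDr // (K_sfr ky hx) add0r.
Qed.

Lemma prol_gen (V : A -> Prop) i v : V v -> prol gen V (gen i * v).
Proof. by move=> h; apply: inspan_gen; right; exists i, v. Qed.

Lemma prol_iter_Csp {l x} : (l <= m)%N -> prol_iter gen l Bsp x -> Csp x.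
Proof.
move=> hl h; apply: Hpro; rewrite -(subnKC hl).
elim: (m - l)%N => [|k IH]; first by rewrite addn0.
by rewrite addnS; apply: inspan_gen; left.
Qed.

Lemma gen_mul_Csp i {v} : Bsp v -> Csp (gen i * v).
Proof. by move=> hv; apply: (@prol_iter_Csp 1) => //=; apply: prol_gen. Qed.

Lemma flat_decomp y : Csp y -> exists b k, [/\ Bsp b, K k & y = b + k].
Proof. by move/Hflat. Qed.

(* Paired with b \in B, a_i k gives <k, a_i^* b>_L = 0 as a_i^* b \in C;
   since C = B + K_L(C), this is all that has to be checked. *)
Lemma prol_kerL z : prol gen K z -> Csp z -> K z.
Proof.
move=> hz hzC.
have orth b y : Bsp b -> prol gen K y -> sq Csp (star b * y) /\ L (star b * y) = 0.
  move=> hb; elim=> {y} [x [hx|[i [k [hk ->]]]]| |x y _ [h1 e1] _ [h2 e2]|c x _ [h1 e1]].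
  - split; first by apply: sq_star; [exact: HBC | exact: K_Csp].
    exact: K_sfl hx (HBC _ hb).
  - have hC := gen_mul_Csp (star_idx i) hb.
    rewrite mulrA -[star b * gen i]starK starM star_gen starK.
    by split; [exact: sq_star hC (K_Csp hk) | exact: K_sfl hk hC].
  - by rewrite mulr0 L0; split=> //; exact: (subspace0 sq_subspace).
  - by rewrite mulrDr LD // e1 e2 addr0; split=> //; exact: (subspaceD sq_subspace h1 h2).
  - by rewrite -scalerAr LZ // e1 mulr0; split=> //; exact: (subspaceZ sq_subspace c h1).
split=> // y /flat_decomp [b [k [hb hk ->]]].
rewrite sfDr //; [|exact: HBC|exact: K_Csp].
by rewrite (K_sfr hk hzC) addr0; exact: (orth b z hb hz).2.
Qed.

Section TotalKernel.
Context {M : A -> C}.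
Hypothesis HM : linear_on (fun _ => True) M.
Local Notation KM := (kerL star M (fun _ => True)).

Lemma linD x y : M (x + y) = M x + M y. Proof. by case: HM => h _; apply: h. Qed.
Lemma linZ (c : C) x : M (c *: x) = c * M x. Proof. by case: HM => _ h; apply: h. Qed.
Lemma lin0 : M 0 = 0. Proof. by rewrite -(scale0r (0 : A)) linZ mul0r. Qed.

Lemma kerT_subspace : subspace KM.
Proof.
split.
- by split=> // b _; rewrite /sform mulr0 lin0.
- move=> x y [_ hx] [_ hy]; split=> // b _.
  have := hx b Logic.I; have := hy b Logic.I.
  by rewrite /sform mulrDr linD => -> ->; rewrite addr0.
- move=> c x [_ hx]; split=> // b _; have := hx b Logic.I.
  by rewrite /sform -scalerAr linZ => ->; rewrite mulr0.
Qed.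

Lemma kerT_mull a {n} : KM n -> KM (a * n).
Proof.
case=> _ h; split=> // b _; rewrite /sform.
have -> : star b * (a * n) = star (star a * b) * n by rewrite starM starK mulrA.
exact: h.
Qed.

Lemma kerT_eval {n} : KM n -> M n = 0.
Proof. by case=> _ /(_ 1 Logic.I); rewrite /sform star1 mul1r. Qed.

End TotalKernel.

Lemma extension_unique_of_L0 {M} : (forall x, sq Csp x -> L x = 0) ->
  linear_on (fun _ => True) M -> (forall x, sq Csp x -> M x = L x) ->
  is_sum (fun _ => True) Csp (kerL star M (fun _ => True)) -> forall x, M x = 0.
Proof.
move=> hL0 hlin hext hsum x; have [c [n [hc hn ->]]] := proj1 (hsum x) Logic.I.
by rewrite (linD hlin) (kerT_eval hn) hext ?hL0 ?addr0 //; apply: sq_Csp.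
Qed.

Section Complement.
Variable B' : A -> Prop.
Hypotheses (HB' : subspace B') (HB'B : forall x, B' x -> Bsp x) (HB'1 : B' 1)
  (HB'dir : is_direct_sum Csp B' K).

Lemma B'_Csp {x} : B' x -> Csp x. Proof. by move/HB'B; apply: HBC. Qed.
Lemma B'_K_eq0 {x} : B' x -> K x -> x = 0. Proof. by case: HB'dir => _; apply. Qed.
Lemma gen_mul_B' i {v} : B' v -> Csp (gen i * v).
Proof. by move/HB'B; apply: gen_mul_Csp. Qed.

Lemma projC_exists c : exists b, Csp c -> B' b /\ K (c - b).
Proof.
case: (pselect (Csp c)) => hc; last by exists 0.
case: HB'dir => /(_ c) [/(_ hc) [p [q [hp hq ->]]] _] _.
by exists p => _; split => //; rewrite addrC addKr.
Qed.

(* The projection of C onto B' along K_L(C); its values outside C are junk. *)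
Definition projC c := proj1_sig (cid (projC_exists c)).

Lemma projC_spec {c} : Csp c -> B' (projC c) /\ K (c - projC c).
Proof. exact: proj2_sig (cid (projC_exists _)). Qed.
Lemma projC_B' {c} : Csp c -> B' (projC c). Proof. by move/projC_spec=> []. Qed.
Lemma projC_K {c} : Csp c -> K (c - projC c). Proof. by move/projC_spec=> []. Qed.

Lemma projC_uniq c b : Csp c -> B' b -> K (c - b) -> projC c = b.
Proof.
move=> hc hb hk; apply/eqP; rewrite -subr_eq0; apply/eqP; apply: B'_K_eq0.
  exact: (subspaceB HB' (projC_B' hc) hb).
have -> : projC c - b = (c - b) - (c - projC c).
  by rewrite [in RHS]opprB [in RHS]addrC [in RHS]addrA subrK.
exact: (subspaceB K_subspace hk (projC_K hc)).
Qed.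

Lemma projCD c1 c2 : Csp c1 -> Csp c2 -> projC (c1 + c2) = projC c1 + projC c2.
Proof.
move=> h1 h2; apply: projC_uniq; first exact: (subspaceD HC h1 h2).
  exact: (subspaceD HB' (projC_B' h1) (projC_B' h2)).
rewrite opprD addrACA; exact: (subspaceD K_subspace (projC_K h1) (projC_K h2)).
Qed.

Lemma projCZ (a : C) c : Csp c -> projC (a *: c) = a *: projC c.
Proof.
move=> h; apply: projC_uniq; first exact: (subspaceZ HC a h).
  exact: (subspaceZ HB' a (projC_B' h)).
by rewrite -scalerBr; apply: (subspaceZ K_subspace a (projC_K h)).
Qed.

Definition gact i v := projC (gen i * v).

Lemma gact_B' i {v} : B' v -> B' (gact i v). Proof. by move/(gen_mul_B' i)/projC_B'. Qed.
Lemma gact_K i {v} : B' v -> K (gen i * v - gact i v). Proof. by move/(gen_mul_B' i)/projC_K. Qed.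
Lemma gactD i v1 v2 : B' v1 -> B' v2 -> gact i (v1 + v2) = gact i v1 + gact i v2.
Proof. by move=> h1 h2; rewrite /gact mulrDr projCD //; apply: gen_mul_B'. Qed.
Lemma gactZ i (a : C) v : B' v -> gact i (a *: v) = a *: gact i v.
Proof. by move=> h; rewrite /gact -scalerAr projCZ //; apply: gen_mul_B'. Qed.

Lemma gact_adj i x c : B' x -> B' c -> sf (gact i x) c = sf x (gact (star_idx i) c).
Proof.
move=> hx hc; have hxC := B'_Csp hx; have hcC := B'_Csp hc.
rewrite -(sf_modKl (B'_Csp (gact_B' i hx)) hcC (gact_K i hx)).
rewrite -(sf_modKr hxC (B'_Csp (gact_B' (star_idx i) hc)) (gact_K (star_idx i) hc)).
by rewrite !sfE starM star_gen_idx mulrA.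
Qed.

Definition wact (w : seq I) v := foldr gact v w.

Lemma wact_cons i w v : wact (i :: w) v = gact i (wact w v). Proof. by []. Qed.
Lemma wact_cat w1 w2 v : wact (w1 ++ w2) v = wact w1 (wact w2 v).
Proof. by rewrite /wact foldr_cat. Qed.
Lemma wact_B' w {v} : B' v -> B' (wact w v).
Proof. by move=> h; elim: w => [|i w IH] //=; apply: gact_B'. Qed.
Lemma wactD w v1 v2 : B' v1 -> B' v2 -> wact w (v1 + v2) = wact w v1 + wact w v2.
Proof. by move=> h1 h2; elim: w => [|i w IH] //=; rewrite IH gactD //; apply: wact_B'. Qed.
Lemma wactZ w (a : C) v : B' v -> wact w (a *: v) = a *: wact w v.
Proof. by move=> h; elim: w => [|i w IH] //=; rewrite IH gactZ //; apply: wact_B'. Qed.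
Lemma wact0 w : wact w 0 = 0.
Proof. by have := wactZ w 0 0 (subspace0 HB'); rewrite !scale0r. Qed.

Lemma wact_sum (T : Type) w (s : seq T) (c : T -> C) (F : T -> A) :
  (forall x, B' (F x)) -> wact w (\sum_(x <- s) c x *: F x) = \sum_(x <- s) c x *: wact w (F x).
Proof.
move=> h; elim: s => [|x s IH]; first by rewrite !big_nil wact0.
have hs : B' (\sum_(y <- s) c y *: F y).
  by apply: (subspace_sum HB') => y; exact: (subspaceZ HB' (c y) (h y)).
have hx := h x; have hcx := subspaceZ HB' (c x) hx.
by rewrite !big_cons wactD // wactZ // IH.
Qed.

Lemma wact_adj w x c : B' x -> B' c -> sf (wact w x) c = sf x (wact (wstar w) c).
Proof.
elim: w x c => [|i w IH] x c hx hc //.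
rewrite wact_cons gact_adj; [|exact: wact_B'|done].
by rewrite IH; [rewrite wstar_cons wact_cat|done|exact: gact_B'].
Qed.

Lemma word_wact {w v} : (size w <= m)%N -> B' v ->
  prol_iter gen (size w) Bsp (word gen w * v) /\ K (word gen w * v - wact w v).
Proof.
elim: w => [|i w IH] hs hv.
  by rewrite word_nil mul1r subrr; split; [exact: HB'B | exact: (subspace0 K_subspace)].
have [hp hk] := IH (ltnW hs) hv.
have hpro : prol_iter gen (size (i :: w)) Bsp (gen i * (word gen w * v)).
  exact: prol_gen.
rewrite word_cons -mulrA wact_cons; split=> //.
have hM : K (gen i * (word gen w * v - wact w v)).
  apply: prol_kerL; first exact: prol_gen.
  rewrite mulrBr; apply: (subspaceB HC (prol_iter_Csp hs hpro) _).
  exact: (gen_mul_B' i (wact_B' w hv)).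
have -> : gen i * (word gen w * v) - gact i (wact w v) =
    gen i * (word gen w * v - wact w v) + (gen i * wact w v - gact i (wact w v)).
  by rewrite mulrBr addrA subrK.
exact: (subspaceD K_subspace hM (gact_K i (wact_B' w hv))).
Qed.

(* Split [w] into two words of length at most [m] and move the left one to the
   other side of the form. *)
Lemma sf_wact {w v c} : (size w <= 2 * m)%N -> B' v -> B' c ->
  sq Csp (star c * (word gen w * v)) /\ sf (wact w v) c = L (star c * (word gen w * v)).
Proof.
move=> hs hv hc.
pose k := (size w - m)%N.
have ew : w = take k w ++ drop k w by rewrite cat_take_drop.
have hu : (size (wstar (take k w)) <= m)%N.
  by rewrite size_wstar size_take; case: ifP; rewrite /k; lia.
have ht : (size (drop k w) <= m)%N by rewrite size_drop /k; lia.
have [hp1 hk1] := word_wact ht hv.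
have [hp2 hk2] := word_wact hu hc.
have e : star (word gen (wstar (take k w)) * c) * (word gen (drop k w) * v) =
    star c * (word gen w * v).
  by rewrite starM star_word_wstar {3}ew word_cat !mulrA.
have y1C := prol_iter_Csp ht hp1; have y2C := prol_iter_Csp hu hp2.
split; first by rewrite -e; apply: sq_star.
rewrite {1}ew wact_cat wact_adj; [|exact: wact_B'|done].
rewrite -(sf_modKl (B'_Csp (wact_B' (drop k w) hv)) (B'_Csp (wact_B' (wstar (take k w)) hc)) hk1).
rewrite -(sf_modKr y1C (B'_Csp (wact_B' (wstar (take k w)) hc)) hk2).
by rewrite sfE e.
Qed.

Lemma sf_nondeg b : B' b -> (forall c, B' c -> sf b c = 0) -> b = 0.
Proof.
move=> hb h; have hbC := B'_Csp hb; apply: B'_K_eq0 => //; split=> // y hy.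
case: HB'dir => /(_ y) [/(_ hy) [p [q [hp hq ->]]] _] _.
have hpC := B'_Csp hp; have hqC := K_Csp hq.
by rewrite sfDr // h // (K_sfr hq hbC) addr0.
Qed.

Definition pact s (p : seq I -> C) v := \sum_(w <- s) p w *: wact w v.

Lemma pact_B' s p v : B' v -> B' (pact s p v).
Proof. by move=> hv; apply: (subspace_sum HB') => w; apply: (subspaceZ HB'); exact: wact_B'. Qed.

Lemma pact_supp_enum {p s1 s2} v : supp_enum p s1 -> supp_enum p s2 ->
  pact s1 p v = pact s2 p v.
Proof. exact: (eq_big_supp_enum (fun w => wact w v)). Qed.

Lemma pact_fadd s p q v : pact s (fadd p q) v = pact s p v + pact s q v.
Proof. by rewrite /pact -big_split; apply: eq_bigr => w _; rewrite /fadd scalerDl. Qed.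

Lemma pact_fmul {u p su sp s v} : supp_enum u su -> supp_enum p sp ->
  supp_enum (fmul u p) s -> B' v -> pact s (fmul u p) v = pact su u (pact sp p v).
Proof.
move=> vu vp vs hv; rewrite (pact_supp_enum _ vs (supp_enum_fmul vu vp)) /pact.
rewrite (big_fmul (fun w => wact w v) vu vp); apply: eq_bigr => w1 _.
rewrite wact_sum; last by move=> w2; apply: wact_B'.
by rewrite scaler_sumr; apply: eq_bigr => w2 _; rewrite scalerA wact_cat.
Qed.

Lemma pact_relation {p} : index_le p (2 * m) -> ker_sigma gen p ->
  forall s, supp_enum p s -> forall v, B' v -> pact s p v = 0.
Proof.
move=> hi /sigma_relP [s0 [vs0 e0]] s vs v hv.
apply: sf_nondeg; first exact: pact_B'.
move=> c hc; have hcC := B'_Csp hc.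
rewrite /pact sf_suml //; last by move=> w; apply/B'_Csp/wact_B'.
have hterm w : sq Csp (star c * ((p w *: word gen w) * v)) /\
    p w * sf (wact w v) c = L (star c * ((p w *: word gen w) * v)).
  have [->|pw] := eqVneq (p w) 0.
    by rewrite mul0r scale0r mul0r mulr0 L0; split=> //; exact: (subspace0 sq_subspace).
  have hs : (size w <= 2 * m)%N by apply: hi; apply/eqP.
  have [hsq ->] := sf_wact hs hv hc.
  rewrite -scalerAl -scalerAr LZ //; split=> //; exact: (subspaceZ sq_subspace (p w) hsq).
transitivity (L (star c * ((\sum_(w <- s) p w *: word gen w) * v))).
  rewrite mulr_suml mulr_sumr L_sum; last by move=> w; case: (hterm w).
  by apply: eq_bigr => w _; case: (hterm w).
by rewrite (eq_big_supp_enum (word gen) vs vs0) -e0 mul0r mulr0 L0.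
Qed.

Lemma pact_ideal {S} : (forall p, ker_sigma gen p <-> ideal_gen S p) ->
  (forall p, S p -> index_le p (2 * m)) -> forall p, ideal_gen S p ->
  fin_supp p /\ forall s, supp_enum p s -> forall v, B' v -> pact s p v = 0.
Proof.
move=> HS1 HS2 p; elim=> {p}.
- move=> p hp; have hk : ker_sigma gen p by apply/HS1; apply: ig_gen.
  split; last exact: pact_relation (HS2 p hp) hk.
  by case/sigma_relP: hk => s [hs _]; exact: supp_enum_fin hs.
- split; first by exists [::].
  by move=> s _ v _; rewrite /pact big1 // => w _; rewrite scale0r.
- move=> p q _ [fp hp] _ [fq hq].
  have [sp vp] := fin_supp_enum fp; have [sq' vq] := fin_supp_enum fq.
  have vpq := supp_enum_fadd vp vq.
  split=> [|s vs v hv]; first exact: supp_enum_fin vpq.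
  rewrite (pact_supp_enum _ vs vpq) pact_fadd.
  by rewrite (hp _ (supp_enum_catl vp)) // (hq _ (supp_enum_catr vq)) // addr0.
- move=> u p fu _ [fp hp].
  have [su vu] := fin_supp_enum fu; have [sp vp] := fin_supp_enum fp.
  have vm := supp_enum_fmul vu vp.
  split=> [|s vs v hv]; first exact: supp_enum_fin vm.
  rewrite (pact_fmul vu vp vs hv) (hp sp vp v hv) /pact big1 // => w _.
  by rewrite wact0 scaler0.
- move=> p u fu _ [fp hp].
  have [su vu] := fin_supp_enum fu; have [sp vp] := fin_supp_enum fp.
  have vm := supp_enum_fmul vp vu.
  split=> [|s vs v hv]; first exact: supp_enum_fin vm.
  by rewrite (pact_fmul vp vu vs hv) hp //; exact: pact_B'.
- move=> p q e _ [fp hp]; split.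
    by case: fp => s0 h; exists s0 => w; rewrite -e; apply: h.
  move=> s [us vs] v hv.
  have vps : supp_enum p s by split=> // w; rewrite e; apply: vs.
  by rewrite -(hp s vps v hv) /pact; apply: eq_bigr => w _; rewrite e.
Qed.

Definition rho a v := pact (rep a).2 (rep a).1 v.

(* Two representations of [a] differ by an element of ker sigma, which acts as
   zero by [pact_ideal]. *)
Lemma rhoE {p s a v} : represents p s a -> B' v -> rho a v = pact s p v.
Proof.
case: Hdelta => S [HS1 HS2] [vp epa] hv.
have [vq eqa] := rep_spec a.
set q := (rep a).1 in vq eqa *; set t := (rep a).2 in vq eqa *.
rewrite /rho -/q -/t.
pose d w := p w - q w.
have vd : supp_enum d (undup (s ++ t)).
  split=> [|w hw]; first exact: undup_uniq.
  have [e|/(proj2 (supp_enum_catl (t := t) vp)) //] := eqVneq (p w) 0.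
  apply: (proj2 (supp_enum_catr (s := s) vq)).
  by apply: contraNneq hw => e'; rewrite /d e e' subrr.
have hk : ker_sigma gen d.
  apply/sigma_relP; exists (undup (s ++ t)); split=> //.
  rewrite /d; under eq_bigr do rewrite scalerBl.
  rewrite sumrB (eq_big_supp_enum (word gen) (supp_enum_catl vp) vp).
  by rewrite (eq_big_supp_enum (word gen) (supp_enum_catr vq) vq) -epa -eqa subrr.
have E : pact (undup (s ++ t)) p v = pact (undup (s ++ t)) q v.
  apply/eqP; rewrite -subr_eq0; apply/eqP.
  rewrite -[RHS]((pact_ideal HS1 HS2 d (proj1 (HS1 d) hk)).2 _ vd v hv) /pact -sumrB.
  by apply: eq_bigr => w _; rewrite /d scalerBl.
rewrite (pact_supp_enum _ (supp_enum_catl vp) vp) in E.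
by rewrite E (pact_supp_enum _ (supp_enum_catr vq) vq).
Qed.

Lemma rho_B' a v : B' v -> B' (rho a v). Proof. exact: pact_B'. Qed.

Lemma rhoD a b v : B' v -> rho (a + b) v = rho a v + rho b v.
Proof.
move=> hv; have [va _] := rep_spec a; have [vb _] := rep_spec b.
rewrite (rhoE (represents_add (rep_spec a) (rep_spec b)) hv) pact_fadd.
by rewrite (pact_supp_enum _ (supp_enum_catl va) va) (pact_supp_enum _ (supp_enum_catr vb) vb).
Qed.

Lemma rhoZ (c : C) a v : B' v -> rho (c *: a) v = c *: rho a v.
Proof.
move=> hv; rewrite (rhoE (represents_scale c (rep_spec a)) hv) /rho /pact scaler_sumr.
by apply: eq_bigr => w _; rewrite scalerA.
Qed.

Lemma rho0 v : B' v -> rho 0 v = 0.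
Proof. by move=> hv; rewrite (rhoE represents0 hv) /pact big_nil. Qed.

Lemma rho_word w v : B' v -> rho (word gen w) v = wact w v.
Proof.
move=> hv; rewrite (rhoE (represents_word w) hv) /pact.
by rewrite big_cons big_nil eqxx scale1r addr0.
Qed.

Lemma rho1 v : B' v -> rho 1 v = v.
Proof. by move=> hv; rewrite -word_nil rho_word. Qed.

Lemma rho_gen i v : B' v -> rho (gen i) v = gact i v.
Proof. by move=> hv; rewrite -[gen i]mulr1 -word_nil -word_cons rho_word. Qed.

Lemma rho_sum (T : Type) (s : seq T) (c : T -> C) (F : T -> A) v : B' v ->
  rho (\sum_(x <- s) c x *: F x) v = \sum_(x <- s) c x *: rho (F x) v.
Proof.
move=> hv; elim: s => [|x s IH]; first by rewrite !big_nil rho0.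
by rewrite !big_cons rhoD // rhoZ // IH.
Qed.

Lemma rhoM a b v : B' v -> rho (a * b) v = rho a (rho b v).
Proof.
move=> hv; have [va ea] := rep_spec a; have [vb eb] := rep_spec b.
set p := (rep a).1 in va ea *; set s := (rep a).2 in va ea *.
set q := (rep b).1 in vb eb *; set t := (rep b).2 in vb eb *.
have key w : rho (word gen w * b) v = wact w (rho b v).
  rewrite {1}eb mulr_sumr.
  under eq_bigr do rewrite -scalerAr -word_cat.
  rewrite rho_sum //.
  transitivity (\sum_(w' <- t) q w' *: wact w (wact w' v)).
    by apply: eq_bigr => w' _; rewrite rho_word // wact_cat.
  by rewrite /rho -/q -/t /pact wact_sum //; move=> x; apply: wact_B'.
transitivity (rho (\sum_(w <- s) p w *: (word gen w * b)) v).
  by rewrite {1}ea mulr_suml; congr (rho _ v); apply: eq_bigr => w _; rewrite scalerAl.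
rewrite rho_sum //; under eq_bigr do rewrite key.
by rewrite /rho -/p -/s.
Qed.

Lemma rho_adj a x c : B' x -> B' c -> sf (rho a x) c = sf x (rho (star a) c).
Proof.
move=> hx hc; have [va ea] := rep_spec a.
set p := (rep a).1 in va ea *; set s := (rep a).2 in va ea *.
have es : star a = \sum_(w <- s) (p w)^* *: word gen (wstar w).
  by rewrite {1}ea star_sum; apply: eq_bigr => w _; rewrite starZ star_word.
rewrite es rho_sum //.
under eq_bigr do rewrite rho_word //.
rewrite sf_sumr; [|by move=> w; apply/B'_Csp/wact_B'|exact: B'_Csp].
rewrite /rho -/p -/s /pact sf_suml; [|by move=> w; apply/B'_Csp/wact_B'|exact: B'_Csp].
by apply: eq_bigr => w _; rewrite conjCK wact_adj.
Qed.

Local Notation phi a := (rho a 1).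

Lemma phi_B' a : B' (phi a). Proof. exact: rho_B'. Qed.
Lemma phi_Csp a : Csp (phi a). Proof. exact: B'_Csp (phi_B' a). Qed.
Lemma phiD a b : phi (a + b) = phi a + phi b. Proof. exact: rhoD. Qed.
Lemma phiZ (c : C) a : phi (c *: a) = c *: phi a. Proof. exact: rhoZ. Qed.
Lemma phiB a b : phi (a - b) = phi a - phi b.
Proof. by rewrite phiD -scaleN1r phiZ scaleN1r. Qed.
Lemma phiM a b : phi (a * b) = rho a (phi b). Proof. exact: rhoM. Qed.

Lemma phi_K {c} : Csp c -> K (c - phi c).
Proof.
case: HconC => _ [Vs [_ [h0 [_ [hsubC [hcover hprol]]]]]] /hcover [l].
elim: l c => [|l IH] y hy.
  by case/h0: hy => c ->; rewrite phiZ rho1 // subrr; apply: (subspace0 K_subspace).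
apply: prol_kerL; last exact: (subspaceB HC (hsubC _ _ hy) (phi_Csp y)).
have := hprol _ _ hy; elim=> {y hy} [x [/IH hx|[i [z [/IH hz ->]]]]| |x y _ hx _ hy|c x _ hx].
- by apply: inspan_gen; left.
- have -> : gen i * z - phi (gen i * z) = gen i * (z - phi z) + (gen i * phi z - gact i (phi z)).
    rewrite phiM rho_gen; last exact: phi_B'.
    by rewrite mulrBr addrA subrK.
  apply: inspanD; first by apply: inspan_gen; right; exists i, (z - phi z).
  by apply: inspan_gen; left; exact: (gact_K i (phi_B' z)).
- by rewrite rho0 // subrr; apply: inspan0.
- by rewrite phiD opprD addrACA; apply: inspanD.
- by rewrite phiZ -scalerBr; apply: inspanZ.
Qed.

Lemma phi_id {b} : B' b -> phi b = b.
Proof.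
move=> hb; apply/eqP; rewrite -subr_eq0; apply/eqP; apply: B'_K_eq0.
  exact: (subspaceB HB' (phi_B' b) hb).
by rewrite -opprB; apply/(subspaceN K_subspace)/phi_K/B'_Csp.
Qed.

Definition Lext a := L (phi a).

Lemma Lext_sf x y : sform star Lext x y = sf (phi x) (phi y).
Proof.
rewrite /sform /Lext phiM -sf1r rho_adj; [|exact: phi_B'|exact: HB'1].
by rewrite starK.
Qed.

Lemma LextD x y : Lext (x + y) = Lext x + Lext y.
Proof. by rewrite /Lext phiD LD //; apply: sq_Csp; exact: phi_Csp. Qed.
Lemma LextZ (c : C) x : Lext (c *: x) = c * Lext x.
Proof. by rewrite /Lext phiZ LZ //; apply: sq_Csp; exact: phi_Csp. Qed.

Lemma Lext_linear : linear_on (fun _ => True) Lext.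
Proof. by split=> *; rewrite ?LextD ?LextZ. Qed.

Lemma Lext_hermitian : hermitian_on star (fun _ => True) Lext.
Proof.
move=> b _; rewrite /Lext -!sf1r rho_adj // starK.
exact: sf_conj Csp1 (phi_Csp b).
Qed.

Lemma Lext_extends x : sq Csp x -> Lext x = L x.
Proof.
elim=> {x} [x [a [b [ha hb ->]]]| |x y hx ex hy ey|c x hx ex].
- rewrite /Lext phiM -sf1r rho_adj; [|exact: phi_B'|exact: HB'1].
  rewrite -(sf_modKl (phi_Csp b) (phi_Csp _) (phi_K hb)).
  rewrite -(sf_modKr hb (phi_Csp _) (phi_K (HCs _ ha))).
  by rewrite sfE starK.
- by rewrite /Lext rho0.
- by rewrite LextD ex ey LD.
- by rewrite LextZ ex LZ.
Qed.

Local Notation KLext := (kerL star Lext (fun _ => True)).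

Lemma kerLextP y : KLext y <-> phi y = 0.
Proof.
split=> [[_ h]|e]; last by split=> // b _; rewrite Lext_sf e sf0l.
apply: sf_nondeg; first exact: phi_B'.
by move=> c hc; have := h c Logic.I; rewrite Lext_sf (phi_id hc).
Qed.

Lemma kerLext_sub y : KLext (y - phi y).
Proof. by apply/kerLextP; rewrite phiB (phi_id (phi_B' y)) subrr. Qed.

Lemma Lext_is_sum (V : A -> Prop) : (forall x, B' x -> V x) ->
  is_sum (fun _ => True) V KLext.
Proof.
move=> hV x; split=> // _; exists (phi x), (x - phi x); split.
- exact: hV (phi_B' x).
- exact: kerLext_sub.
- by rewrite addrC subrK.
Qed.

Lemma Lext_direct_sum : is_direct_sum (fun _ => True) B' KLext.
Proof. by split; [apply: Lext_is_sum | move=> x hx /kerLextP; rewrite (phi_id hx)]. Qed.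

Lemma Lext_nondeg b : B' b -> (forall b', B' b' -> sform star Lext b b' = 0) -> b = 0.
Proof.
move=> hb h; apply: sf_nondeg => // c hc.
by have := h c hc; rewrite Lext_sf (phi_id hb) (phi_id hc).
Qed.

(* The kernel of any such [M] is a left ideal containing K_L(C), hence it
   contains every [a - phi a]. *)
Lemma Lext_unique M :
  linear_on (fun _ => True) M -> hermitian_on star (fun _ => True) M ->
  (forall x, sq Csp x -> M x = L x) ->
  is_sum (fun _ => True) Csp (kerL star M (fun _ => True)) ->
  forall x, M x = Lext x.
Proof.
move=> hlin hh hext hsum.
have K_kerM k : K k -> kerL star M (fun _ => True) k.
  move=> hk; split=> // b _.
  have [c [n [hc [_ hn] ->]]] := proj1 (hsum b) Logic.I.
  rewrite /sform starD mulrDl (linD hlin) hext; last exact: sq_star hc (K_Csp hk).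
  have e : M (star n * k) = (M (star k * n))^* by rewrite -hh // starM starK.
  have hnk : M (star k * n) = 0 := hn k Logic.I.
  by rewrite -sfE (K_sfl hk hc) add0r e hnk conjC0.
have word_kerM w v : B' v -> kerL star M (fun _ => True) (word gen w * v - wact w v).
  elim: w v => [|i w IH] v hv.
    by rewrite word_nil mul1r subrr; apply: (subspace0 (kerT_subspace hlin)).
  have -> : word gen (i :: w) * v - wact (i :: w) v =
      gen i * (word gen w * v - wact w v) + (gen i * wact w v - gact i (wact w v)).
    by rewrite word_cons wact_cons -mulrA mulrBr addrA subrK.
  apply: (subspaceD (kerT_subspace hlin) (kerT_mull (gen i) (IH _ hv)) _).
  exact/K_kerM/gact_K/wact_B'.
have phi_kerM a : kerL star M (fun _ => True) (a - phi a).
  have [_ ea] := rep_spec a.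
  have -> : a - phi a = \sum_(w <- (rep a).2) (rep a).1 w *: (word gen w * 1 - wact w 1).
    rewrite {1}ea /rho /pact -sumrB; apply: eq_bigr => w _; by rewrite mulr1 scalerBr.
  apply: (subspace_sum (kerT_subspace hlin)) => w.
  exact: (subspaceZ (kerT_subspace hlin) ((rep a).1 w) (word_kerM w 1 HB'1)).
move=> x; rewrite -[X in M X](subrK (phi x)) (linD hlin) (kerT_eval (phi_kerM x)).
by rewrite add0r hext //; apply: sq_Csp; exact: phi_Csp.
Qed.

Lemma Lext_pos : positive_on star Csp L -> positive_on star (fun _ => True) Lext.
Proof.
move=> hp a _; have := Lext_sf a a; rewrite /sform => ->.
exact: hp _ (phi_Csp a).
Qed.

Lemma Lext_definite : positive_on star Csp L ->
  forall b, B' b -> b <> 0 -> 0 < sform star Lext b b.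
Proof.
move=> hp b hb b0; have hbC := B'_Csp hb.
rewrite Lext_sf (phi_id hb).
have ge : 0 <= sf b b := hp b hbC.
rewrite lt_def ge andbT; apply/eqP => e0; apply: b0; apply: sf_nondeg => // c hc.
have hcC := B'_Csp hc.
rewrite (sf_conj hbC hcC); apply/eqP; rewrite conjC_eq0; apply/eqP.
apply: (@conj_affine_ge0_eq0 _ (sf c c)) => t.
have htb := subspaceZ HC t hbC; have hy := subspaceD HC hcC htb.
have := hp _ hy; rewrite -sfE sfDl // !sfDr // !sfZl // !sfZr //.
by rewrite e0 !mulr0 addr0 (sf_conj hbC hcC).
Qed.

Lemma Lext_star_rep : exists pi : A -> A,
  (forall x, B' (pi x)) /\ (forall x, KLext (x - pi x)) /\
  (forall c, Csp c -> K (c - pi c)) /\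
  star_rep star B' (sform star Lext) (fun a b => pi (a * b)) /\
  (forall a, Lext a = sform star Lext (pi (a * 1)) 1).
Proof.
exists (fun a => phi a); split; first exact: phi_B'.
split; first exact: kerLext_sub.
split; first by move=> c /phi_K.
split; last by move=> a /=; rewrite Lext_sf mulr1 (phi_id (phi_B' a)) rho1 // sf1r.
split; first by move=> a v _; exact: phi_B'.
split; first by move=> a v w _ _ /=; rewrite mulrDr phiD.
split; first by move=> a c v _ /=; rewrite -scalerAr phiZ.
split; first by move=> a b v _ /=; rewrite mulrDl phiD.
split; first by move=> c a v _ /=; rewrite -scalerAl phiZ.
split.
  move=> a b v _ /=; rewrite -mulrA phiM [in RHS]phiM.
  by rewrite (phi_id (phi_B' (b * v))).
split; first by move=> v hv /=; rewrite mul1r (phi_id hv).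
move=> a v w hv hw /=; rewrite !Lext_sf (phi_id (phi_B' (a * v))).
by rewrite (phi_id (phi_B' (star a * w))) !phiM rho_adj //; exact: phi_B'.
Qed.

Lemma complement_extension : exists LL : A -> C,
  linear_on (fun _ => True) LL /\
  hermitian_on star (fun _ => True) LL /\
  (forall x, sq Csp x -> LL x = L x) /\
  is_sum (fun _ => True) Csp (kerL star LL (fun _ => True)) /\
  is_sum (fun _ => True) Bsp (kerL star LL (fun _ => True)) /\
  (forall M : A -> C,
      linear_on (fun _ => True) M ->
      hermitian_on star (fun _ => True) M ->
      (forall x, sq Csp x -> M x = L x) ->
      is_sum (fun _ => True) Csp (kerL star M (fun _ => True)) ->
      forall x, M x = LL x) /\
  (positive_on star Csp L -> positive_on star (fun _ => True) LL) /\
  is_direct_sum (fun _ => True) B' (kerL star LL (fun _ => True)) /\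
  (forall b, B' b -> (forall b', B' b' -> sform star LL b b' = 0) -> b = 0) /\
  (exists pi : A -> A,
    (forall x, B' (pi x)) /\
    (forall x, kerL star LL (fun _ => True) (x - pi x)) /\
    (forall c, Csp c -> K (c - pi c)) /\
    star_rep star B' (sform star LL) (fun a b => pi (a * b)) /\
    (forall a, LL a = sform star LL (pi (a * 1)) 1)) /\
  (positive_on star Csp L -> forall b, B' b -> b <> 0 -> 0 < sform star LL b b).
Proof.
exists Lext; split; first exact: Lext_linear.
split; first exact: Lext_hermitian.
split; first exact: Lext_extends.
split; first by apply: Lext_is_sum => x; exact: B'_Csp.
split; first exact: Lext_is_sum.
split; first exact: Lext_unique.
split; first exact: Lext_pos.
split; first exact: Lext_direct_sum.
split; first exact: Lext_nondeg.
split; first exact: Lext_star_rep.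
exact: Lext_definite.
Qed.

End Complement.

Section ComplementExists.
Hypotheses (HB : subspace Bsp) (HconB : connected_to_1 gen Bsp).

Lemma kerL1_Bsp : K 1 -> forall x, Bsp x -> K x.
Proof.
move=> hK1; case: HconB => _ [Vs [_ [h0 [_ [hsubB [hcover hprol]]]]]] x /hcover [l].
elim: l x => [|l IH] x hx.
  by case/h0: hx => c ->; apply: (subspaceZ K_subspace).
apply: prol_kerL; last exact: HBC _ (hsubB _ _ hx).
exact: prol_subset IH _ (hprol _ _ hx).
Qed.

Lemma kerL1_L0 : K 1 -> forall x, sq Csp x -> L x = 0.
Proof.
move=> hK1 x; have Csp_K y : Csp y -> K y.
  case/flat_decomp=> b [k [hb hk ->]].
  exact: (subspaceD K_subspace (kerL1_Bsp hK1 _ hb) hk).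
elim=> {x} [x [a [b [ha hb ->]]]| |x y hx ex hy ey|c x hx ex].
- by rewrite -[a]starK -sfE; apply: K_sfl (Csp_K _ hb) (HCs _ ha).
- exact: L0.
- by rewrite LD // ex ey addr0.
- by rewrite LZ // ex mulr0.
Qed.

(* Candidates for the complement B'; Zorn's lemma yields a maximal one. *)
Definition admissible (W : A -> Prop) :=
  [/\ subspace W, forall x, W x -> Bsp x, W 1 & forall x, W x -> K x -> x = 0].

Lemma admissible_line : ~ K 1 -> admissible (fun x => exists c : C, x = c *: 1).
Proof.
move=> n1K; split.
- split; first by exists 0; rewrite scale0r.
  + by move=> x y [a ->] [b ->]; exists (a + b); rewrite scalerDl.
  + by move=> c x [a ->]; exists (c * a); rewrite scalerA.
- by move=> x [a ->]; apply: (subspaceZ HB); case: HconB.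
- by exists 1; rewrite scale1r.
- move=> x [a ->] hK; have [->|a0] := eqVneq a 0; first by rewrite scale0r.
  case: n1K; have := subspaceZ K_subspace a^-1 hK.
  by rewrite scalerA mulVf // scale1r.
Qed.

Lemma admissible_bigcup {F : set (set A)} :
  (forall X, F X -> X = set0 \/ admissible X) -> total_on F subset ->
  (exists2 X, F X & admissible X) -> admissible (\bigcup_(X in F) X)%classic.
Proof.
move=> FP Ftot [X0 FX0 aX0].
have aF X x : F X -> X x -> admissible X.
  by move=> FX Xx; case: (FP X FX) => // eX; rewrite eX in Xx.
split.
- split.
  + by exists X0 => //; case: aX0 => [[]].
  + move=> x y [X FX Xx] [Y FY Yy]; have [XY|YX] := Ftot X Y FX FY.
    * by exists Y => //; case: (aF Y y FY Yy) => sY _ _ _; apply: (subspaceD sY (XY _ Xx) Yy).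
    * by exists X => //; case: (aF X x FX Xx) => sX _ _ _; apply: (subspaceD sX Xx (YX _ Yy)).
  + move=> c x [X FX Xx]; exists X => //.
    by case: (aF X x FX Xx) => sX _ _ _; apply: (subspaceZ sX).
- by move=> x [X FX Xx]; case: (aF X x FX Xx) => _ h _ _; apply: h.
- by exists X0 => //; case: aX0.
- by move=> x [X FX Xx]; case: (aF X x FX Xx) => _ _ _; apply.
Qed.

Lemma admissible_adjoin {W b} : admissible W -> Bsp b ->
  ~ (exists p q, [/\ W p, K q & b = p + q]) ->
  exists2 W', (W `<` W')%classic & admissible W'.
Proof.
move=> [sW WB W1 WK] hb nb.
exists (fun x => exists a c, W a /\ x = a + c *: b).
  split=> [y Wy|sub]; first by exists y, 0; rewrite scale0r addr0.
  apply: nb; exists b, 0; split; [|exact: (subspace0 K_subspace)|by rewrite addr0].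
  by apply: sub; exists 0, 1; rewrite scale1r add0r; split=> //; exact: (subspace0 sW).
split.
- split.
  + by exists 0, 0; rewrite scale0r addr0; split=> //; exact: (subspace0 sW).
  + move=> y z [a [c [ha ->]]] [a' [c' [ha' ->]]]; exists (a + a'), (c + c').
    by split; [exact: (subspaceD sW ha ha') | rewrite scalerDl addrACA].
  + move=> d y [a [c [ha ->]]]; exists (d *: a), (d * c).
    by split; [exact: (subspaceZ sW d ha) | rewrite scalerDr scalerA].
- by move=> y [a [c [ha ->]]]; apply: (subspaceD HB (WB _ ha) (subspaceZ HB c hb)).
- by exists 1, 0; rewrite scale0r addr0.
- move=> y [a [c [ha ->]]] hK; have [c0|c0] := eqVneq c 0.
    by move: hK; rewrite c0 scale0r addr0 => hK; apply: WK.
  case: nb; exists (- (c^-1 *: a)), (c^-1 *: (a + c *: b)); split.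
  + exact: (subspaceN sW (subspaceZ sW c^-1 ha)).
  + exact: (subspaceZ K_subspace c^-1 hK).
  + by rewrite scalerDr scalerA mulVf // scale1r addrA addNr add0r.
Qed.

Lemma complement_exists : (exists x, sq Csp x /\ L x <> 0) ->
  exists B' : A -> Prop,
    subspace B' /\ (forall x, B' x -> Bsp x) /\ B' 1 /\ is_direct_sum Csp B' K.
Proof.
move=> [x0 [hx0 Lx0]].
have n1K : ~ K 1 by move=> /kerL1_L0 h; apply: Lx0; exact: h.
pose P (W : set A) := W = set0 \/ admissible W.
have [W [PW Wmax]] : exists W, P W /\ forall W', (W `<` W')%classic -> ~ P W'.
  apply: Zorn_bigcup => F FP Ftot.
  have [[X FX aX]|noX] := pselect (exists2 X, F X & admissible X).
    by right; apply: admissible_bigcup FP Ftot _; exists X.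
  left; apply/seteqP; split=> x // [X FX Xx].
  by case: (FP X FX) => [eX|aX]; [rewrite eX in Xx | case: noX; exists X].
have aW : admissible W.
  case: PW => // eW; exfalso; apply: (Wmax _ _ (or_intror (admissible_line n1K))).
  by rewrite eW; split=> [x //|/(_ 1)]; apply; exists 1; rewrite scale1r.
case: (aW) => sW WB W1 WK; exists W; do 3 (split=> //); split=> // x; split.
- case/flat_decomp=> b [k [hb hk ->]].
  have [[p [q [hp hq ->]]]|nb] := pselect (exists p q, [/\ W p, K q & b = p + q]).
    by exists p, (q + k); split=> //; [exact: (subspaceD K_subspace hq hk) | rewrite addrA].
  have [W' ltW aW'] := admissible_adjoin aW hb nb.
  by exfalso; exact: Wmax _ ltW (or_intror aW').
- by case=> p [q [hp hq ->]]; apply: (subspaceD HC (HBC _ (WB _ hp)) (K_Csp hq)).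
Qed.

End ComplementExists.

End FlatExtension.

Theorem theorem3p1
  (C : numClosedFieldType) (A : algType C) (star : A -> A)
  (I : Type) (gen : I -> A)
  (Bsp Csp : A -> Prop) (m : nat) (L : A -> C) :
  is_involution star ->
  generates gen ->
  (forall i, exists j, star (gen i) = gen j) ->
  subspace Bsp -> star_invariant star Bsp ->
  subspace Csp -> star_invariant star Csp ->
  (forall x, Bsp x -> Csp x) ->
  connected_to_1 gen Bsp -> connected_to_1 gen Csp ->
  (1 <= m)%N ->
  (forall x, prol_iter gen m Bsp x -> Csp x) ->
  delta_le gen (2 * m) ->
  linear_on (sq Csp) L -> hermitian_on star (sq Csp) L ->
  is_sum Csp Bsp (kerL star L Csp) ->
  exists LL : A -> C,
    (* (1) existence *)
    linear_on (fun _ => True) LL /\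
    hermitian_on star (fun _ => True) LL /\
    (forall x, sq Csp x -> LL x = L x) /\
    is_sum (fun _ => True) Csp (kerL star LL (fun _ => True)) /\
    is_sum (fun _ => True) Bsp (kerL star LL (fun _ => True)) /\
    (* (1) uniqueness *)
    (forall LL' : A -> C,
        linear_on (fun _ => True) LL' ->
        hermitian_on star (fun _ => True) LL' ->
        (forall x, sq Csp x -> LL' x = L x) ->
        is_sum (fun _ => True) Csp (kerL star LL' (fun _ => True)) ->
        forall x, LL' x = LL x) /\
    (* (2) a choice of B' is possible unless L == 0 *)
    ((exists x, sq Csp x /\ L x <> 0) ->
      exists B' : A -> Prop,
        subspace B' /\ (forall x, B' x -> Bsp x) /\ B' 1 /\
        is_direct_sum Csp B' (kerL star L Csp)) /\
    (* (3) positivity of LL *)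
    (positive_on star Csp L -> positive_on star (fun _ => True) LL) /\
    (* (2) and (3), for every admissible B' *)
    (forall B' : A -> Prop,
      subspace B' -> (forall x, B' x -> Bsp x) -> B' 1 ->
      is_direct_sum Csp B' (kerL star L Csp) ->
      is_direct_sum (fun _ => True) B' (kerL star LL (fun _ => True)) /\
      (forall b, B' b -> (forall b', B' b' -> sform star LL b b' = 0) -> b = 0) /\
      (exists pi : A -> A,
        (forall x, B' (pi x)) /\
        (forall x, kerL star LL (fun _ => True) (x - pi x)) /\
        (forall c, Csp c -> kerL star L Csp (c - pi c)) /\
        star_rep star B' (sform star LL) (fun a b => pi (a * b)) /\
        (forall a, LL a = sform star LL (pi (a * 1)) 1)) /\
      (positive_on star Csp L ->
        forall b, B' b -> b <> 0 -> 0 < sform star LL b b)).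
Proof.
move=> Hinv Hgen Hgs HB _ HC HCs HBC HconB HconC Hm Hpro Hdelta HLlin HLh Hflat.
have ext := complement_extension (I := {classic I}) (gen := gen)
  Hinv Hgen Hgs HC HCs HBC HconC Hm Hpro Hdelta HLlin HLh Hflat.
have complement := complement_exists (I := {classic I}) (gen := gen)
  Hinv Hgs HC HCs HBC Hm Hpro HLlin HLh Hflat HB HconB.
have [[B0 [sB0 [B0B [B01 dB0]]]]|noB] := pselect (exists B0 : A -> Prop,
  subspace B0 /\ (forall x, B0 x -> Bsp x) /\ B0 1 /\ is_direct_sum Csp B0 (kerL star L Csp)).
  have [LL [lin [herm [ex [sC [sB [unique [pos _]]]]]]]] := ext B0 sB0 B0B B01 dB0.
  exists LL; do 6 (split=> //); split; first by exists B0.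
  split=> // B' sB' B'B B'1 dB'.
  have [LL' [lin' [herm' [ex' [sC' [_ [_ [_ props]]]]]]]] := ext B' sB' B'B B'1 dB'.
  by have -> : LL = LL' by apply/funext => x; symmetry; exact: unique.
have hL0 x : sq Csp x -> L x = 0.
  by move=> hx; apply/eqP/negPn/negP => /eqP hL; apply: noB; apply: complement; exists x.
have K0 x : kerL star (fun _ : A => 0 : C) (fun _ => True) x by split.
exists (fun _ => 0); split; first by split=> *; rewrite ?addr0 ?mulr0.
split; first by move=> b _; rewrite conjC0.
split; first by move=> x /hL0.
split; first by move=> x; split=> // _; exists 0, x; split; [exact: (subspace0 HC) | exact: K0 | rewrite add0r].
split; first by move=> x; split=> // _; exists 0, x; split; [exact: (subspace0 HB) | exact: K0 | rewrite add0r].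
split; first by move=> M hlin _ hext hsum;
  exact: (extension_unique_of_L0 (I := {classic I}) (gen := gen) Hinv HconC hL0 hlin hext hsum).
split; first exact: complement.
split; first by move=> _ a _.
by move=> B' sB' B'B B'1 dB'; case: noB; exists B'.
Qed.
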